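(* Let $G$ be a finite group with $d(G)\geq 2$, and assume that $G$ is $2$-flexible. Then $G$ is $1$-flexible if and only if $\mathrm{Cyc}(G)=1$.
   Context: For a finite group $H$, $d(H)$ denotes the minimal size of a generating set of $H$. For an integer $1 \leq k \leq d(G)$, $G$ is called $k$-flexible if for any $x_1,\dots,x_k \in G$ with $d(\langle x_1,\dots,x_k\rangle)=k$ there exist $x_{k+1},\dots,x_{d(G)} \in G$ such that $\langle x_1,\dots,x_{d(G)}\rangle = G$. The cycliciser of $G$ is $\mathrm{Cyc}(G) = \{c \in G \mid \langle c,g\rangle \text{ is cyclic for all } g \in G\}$. *)

From mathcomp Require Import all_boot all_fingroup all_solvable.
Set Implicit Arguments. Unset Strict Implicit. Unset Printing Implicit Defensive.
Local Open Scope group_scope.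

(* d(H) is MathComp's gen_rank H (notation 'm(H)), abelian.v:
   the minimal cardinality of a generating set of H. *)

Definition flexible (gT : finGroupType) (G : {group gT}) (k : nat) : Prop :=
  forall x : k.-tuple gT,
    (forall i, i \in x -> i \in G) ->
    gen_rank <<[set z | z \in x]>> = k ->
    exists y : (gen_rank G - k).-tuple gT,
      (forall i, i \in y -> i \in G) /\
      <<[set z | z \in x] :|: [set z | z \in y]>> = G.

Definition cycliciser (gT : finGroupType) (G : {group gT}) : {set gT} :=
  [set c in G | [forall g in G, cyclic <<[set c; g]>>]].

From mathcomp Require Import all_boot all_fingroup all_solvable.

Set Implicit Arguments.
Unset Strict Implicit.
Unset Printing Implicit Defensive.

Local Open Scope group_scope.

(* If 1 <> c lies in Cyc(G) and G is 1-flexible, extend c to a generating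
   tuple c, y_1, ..., y_(d-1); as <c, y_1> = <z> is cyclic, the d - 1 elements
   z, y_2, ..., y_(d-1) already generate G, which is absurd.  Conversely, if
   Cyc(G) = 1, every c <> 1 has a partner g with <c, g> not cyclic, i.e. with
   d(<c, g>) = 2, and 2-flexibility extends c, g to a generating d(G)-tuple. *)

Section GenRank.
Variable gT : finGroupType.
Implicit Types (A B : {set gT}) (H : {group gT}) (x y : gT).

Lemma grank_eq0 H : ('m(H) == 0) = (H :==: 1).
Proof.
apply/idP/eqP => [|->]; last first.
  by have := grank_min (set0 : {set gT}); rewrite gen0 cards0 leqn0.
case: (grank_witness H) => B <- <-; rewrite cards_eq0 => /eqP->.
exact: gen0.
Qed.

Lemma grank_le1 H : ('m(H) <= 1) = cyclic H.
Proof.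
apply/idP/cyclicP => [|[x ->]]; last by rewrite -(cards1 x) grank_min.
case: (grank_witness H) => B <- <-; rewrite leq_eqVlt ltnS leqn0 cards_eq0.
case/orP=> [/cards1P[x ->]|/eqP->]; first by exists x.
by exists 1; rewrite gen0 cycle1.
Qed.

Lemma grank_cycle x : 'm(<[x]>) = (x != 1).
Proof.
case: eqP => [-> | /eqP nt_x]; first by apply/eqP; rewrite cycle1 grank_eq0.
by apply/eqP; rewrite eqn_leq grank_le1 cycle_cyclic lt0n grank_eq0 cycle_eq1.
Qed.

Lemma grank_gen2_noncyclic x y :
  ~~ cyclic <<[set x; y]>> -> 'm(<<[set x; y]>>) = 2.
Proof.
move=> ncyc; apply/eqP; rewrite eqn_leq ltnNge grank_le1 ncyc andbT.
by apply: leq_trans (grank_min _) _; rewrite cards2; case: eqP.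
Qed.

Lemma grank_genU_cyclic A B : cyclic <<A>> -> 'm(<<A :|: B>>) <= #|B|.+1.
Proof.
case/cyclicP=> z defA.
have ->: <<A :|: B>> = <<z |: B>> by rewrite -!joingE -joing_idl defA joing_idl.
by apply: leq_trans (grank_min _) _; rewrite cardsU1 -add1n leq_add2r leq_b1.
Qed.

End GenRank.

Section Flexibility.
Variables (gT : finGroupType) (G : {group gT}).

Lemma cycliciserP c :
  reflect (c \in G /\ {in G, forall g, cyclic <<[set c; g]>>})
          (c \in cycliciser G).
Proof. by rewrite inE; apply: (iffP andP) => -[cG /forall_inP]. Qed.

Lemma cycliciser1 : 1 \in cycliciser G.
Proof.
apply/cycliciserP; split=> [|g _]; first exact: group1.
apply: cyclicS (cycle_cyclic g).
by rewrite gen_subG subUset !sub1set group1 cycle_id.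
Qed.

Lemma flexible1_cycliciser_trivial :
  2 <= 'm(G) -> flexible G 1 -> cycliciser G = 1.
Proof.
move=> mG2 flexG1; apply/eqP; rewrite eqEsubset sub1set cycliciser1 andbT.
apply/subsetP=> c Cc; rewrite inE; apply: contraTT mG2; rewrite -leqNgt => nt_c.
have [cG cycC] := cycliciserP c Cc.
have [||y [yG defG]] := flexG1 [tuple c].
- by move=> z; rewrite inE => /eqP->.
- have ->: [set z | z \in [tuple c]] = [set c] by apply/setP => z; rewrite !inE.
  by rewrite [LHS](grank_cycle c) nt_c.
case: y yG defG => [[|y0 ys] sz_y] /= yG defG.
  by move: (sz_y); rewrite eq_sym subn_eq0.
have y0G : y0 \in G by apply: yG; rewrite mem_head.
have defG' : G :=: <<[set c; y0] :|: [set z in ys]>>.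
  by rewrite -defG; congr <<_>>; apply/setP => z; rewrite !inE orbA.
have := grank_genU_cyclic [set z in ys] (cycC y0 y0G).
rewrite -defG' cardsE => le_m.
have le_ys : #|ys| < 'm(G) - 1 by rewrite -(eqP sz_y) ltnS card_size.
by case: 'm(G) (leq_trans le_m le_ys) => // m; rewrite subSS subn0 ltnn.
Qed.

Lemma cycliciser_trivial_flexible1 :
  2 <= 'm(G) -> flexible G 2 -> cycliciser G = 1 -> flexible G 1.
Proof.
move=> mG2 flexG2 CycG1 x; case/tupleP: x => c x0; rewrite tuple0.
have ->: [set z | z \in [tuple c]] = [set c] by apply/setP => z; rewrite !inE.
move=> xG; rewrite [LHS](grank_cycle c); case: eqP => // /eqP nt_c _.
have cG : c \in G by apply: xG; rewrite mem_head.
have /exists_inP[g gG ncyc] : [exists g in G, ~~ cyclic <<[set c; g]>>].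
  rewrite -negb_forall_in; apply: contra nt_c => cycC.
  have: c \in cycliciser G by rewrite inE cG.
  by rewrite CycG1 inE.
have [||y [yG defG]] := flexG2 [tuple c; g].
- by move=> z; rewrite !inE => /orP[]/eqP->.
- have ->: [set z | z \in [tuple c; g]] = [set c; g] by apply/setP=> z; rewrite !inE.
  exact: grank_gen2_noncyclic.
have sz_gy : size (g :: y) == 'm(G) - 1 by rewrite /= size_tuple -subSn.
exists (Tuple sz_gy); split.
- by move=> z; rewrite inE => /predU1P[->|/yG].
- by apply: etrans defG; congr <<_>>; apply/setP=> z; rewrite !inE orbA.
Qed.

End Flexibility.

Theorem lemma2p5 (gT : finGroupType) (G : {group gT}) :
  2 <= gen_rank G -> flexible G 2 ->
  (flexible G 1 <-> cycliciser G = 1).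
Proof.
move=> mG2 flexG2; split; first exact: flexible1_cycliciser_trivial.
exact: cycliciser_trivial_flexible1.
Qed.
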